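(* Let $\mathbf A=(A,b,c,V)\in\mathcal B_{\mu,M}(\Omega)$, where $V\in L^1_{\rm loc}(\Omega)$ is nonnegative, let $V_m=\min\{V,m\}$ and $\mathbf A_m=(A,b,c,V_m)$ for $m\in\mathbb N_+$, and let $p\in(1,\infty)$, $q=p/(p-1)$. Then: (i) for every $\varepsilon\in(0,\mu)$ there exists $m_\varepsilon\ge0$ such that $\mathbf A_m\in\mathcal B_{\mu-\varepsilon,M}(\Omega)$ for all $m\ge m_\varepsilon$; (ii) if $\mathbf A\in\mathcal S_p(\Omega)$, then for every $\varepsilon\in(0,\mu_p(\mathbf A))$ there exists $m_{\varepsilon,p}\ge0$ such that $\mathbf A_m\in\mathcal S_p(\Omega)$ and $\mu_p(\mathbf A_m)\ge\mu_p(\mathbf A)-\varepsilon$ for all $m\ge m_{\varepsilon,p}$; moreover $\lim_{m\to\infty}\mu_p(\mathbf A_m)=\mu_p(\mathbf A)$. In particular, if $\mathbf A\in\mathcal B_p(\Omega)$, then $\mathbf A_m\in\mathcal B_p(\Omega)$ for all sufficiently large $m$ (namely $m\ge\max\{m_{\varepsilon,p},m_{\varepsilon,q}\}$).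
   Context: $\Omega\subseteq\mathbb R^d$ nonempty open; $\langle \xi,\sigma\rangle=\sum_j\xi_j\overline{\sigma_j}$. $\mathcal{A}(\Omega)$: measurable $A:\Omega\to\mathbb{C}^{d\times d}$ with $\lambda,\Lambda>0$ such that $\Re\langle A(x)\xi,\xi\rangle\ge\lambda|\xi|^2$, $|\langle A(x)\xi,\sigma\rangle|\le\Lambda|\xi||\sigma|$ a.e. $\mathcal{J}_s\xi=\frac s2(\xi+(1-\frac2s)\overline\xi)$, $\Delta_s(A)=\operatorname{ess\,inf}_{x}\min_{|\xi|=1}\Re\langle A(x)\xi,\xi+|1-2/s|\overline\xi\rangle$, $\mathcal A_s=\{A\in\mathcal A(\Omega):\Delta_s(A)>0\}$, $\Gamma_s^{\mathbf A}(x,\xi)=\Re\langle A\xi,\mathcal J_s\xi\rangle+\Re\langle b+\mathcal J_sc,\xi\rangle+V$, for quadruples $\mathbf A=(A,b,c,V)$ with $A\in\mathcal A(\Omega)$, $b,c\in L^\infty(\Omega;\mathbb C^d)$, $0\le V\in L^1_{\rm loc}(\Omega)$. $\mathcal B_{\mu,M}(\Omega)$ ($\mu\in(0,1]$, $M>0$): such quadruples with $\Gamma_2^{\mathbf A}(x,\xi)\ge\mu(|\xi|^2+V(x))$ and $|b(x)-c(x)|\le M\sqrt{V(x)}$ for a.e. $x$, all $\xi$. $\mathcal S_s(\Omega)$: quadruples with $A\in\mathcal A_s(\Omega)$, $|b-c|\le M'\sqrt V$ a.e. for some $M'>0$, and $\Gamma_s^{\mathbf A}\ge\mu'(|\xi|^2+V)$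 a.e. for some $\mu'>0$; $\mu_s(\mathbf A)$ the largest such $\mu'$. $\mathcal B_p=\mathcal S_p\cap\mathcal S_q$. *)

From HB Require Import structures.
From mathcomp Require Import all_boot all_order all_algebra.
From mathcomp Require Import all_classical all_reals all_analysis.
From mathcomp Require Import ess_sup_inf.
From mathcomp.real_closed Require Import complex.

Set Implicit Arguments.
Unset Strict Implicit.
Unset Printing Implicit Defensive.

Import Order.TTheory GRing.Theory Num.Theory numFieldNormedType.Exports.

Local Open Scope classical_set_scope.
Local Open Scope ring_scope.

(* Lebesgue measure on R^d = 'rV[R]_d, built as in textbooks:          *)
(* the Lebesgue outer measure is the infimum of sum of volumes of      *)
(* countable covers by half-open boxes; the Lebesgue measurable sets   *)
(* are the Caratheodory-measurable sets for that outer measure.        *)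
Section LebesgueRd.
Variables (R : realType) (d : nat).

Definition box (a b : 'rV[R]_d) : set 'rV[R]_d :=
  [set x | forall i : 'I_d, a ord0 i <= x ord0 i < b ord0 i].

Definition box_vol (a b : 'rV[R]_d) : R :=
  \prod_(i < d) Num.max (b ord0 i - a ord0 i) 0.

Definition boxes : set (set 'rV[R]_d) :=
  [set X | exists a b, X = box a b].

(* volume of a box (the empty set gets volume 0); +oo on sets which are
   not boxes, so that covers effectively range over countable box covers *)
Definition box_content (X : set 'rV[R]_d) : \bar R :=
  ereal_inf [set y | (X = set0 /\ y = 0%E) \/
                     exists a b, X = box a b /\ y = (box_vol a b)%:E].

Lemma box_content_ge0 X : (0 <= box_content X)%E.
Proof.
apply: le_ereal_inf_tmp => y [[_ ->]//|[a [b [_ ->]]]].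
rewrite lee_fin; apply: prodr_ge0 => i _.
by rewrite le_max lexx orbT.
Qed.

Lemma box_content0 : box_content set0 = 0%E.
Proof.
apply/eqP; rewrite eq_le box_content_ge0 andbT.
by apply: ereal_inf_lbound; left.
Qed.

Definition RdB := g_sigma_algebraType boxes.

Definition lebesgue_outer : set RdB -> \bar R :=
  @mu_ext _ RdB R box_content.

HB.instance Definition _ := isOuterMeasure.Build R RdB lebesgue_outer
  (@mu_ext0 _ RdB R box_content box_content0 box_content_ge0)
  (@mu_ext_ge0 _ RdB R box_content box_content_ge0)
  (@le_mu_ext _ RdB R box_content)
  (@mu_ext_sigma_subadditive _ RdB R box_content box_content_ge0).

Definition lebO : {outer_measure set RdB -> \bar R} := lebesgue_outer.

Definition Rd := caratheodory_type lebO.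

Definition leb : {measure set Rd -> \bar R} := (lebO : set Rd -> \bar R).

End LebesgueRd.

Section Complex.
Variables (R : realType) (d : nat).
Local Notation C := (complex R).

Definition rC (x : R) : C := Complex x 0.

Definition cabs (z : C) : R := Num.sqrt (complex.Re z ^+ 2 + complex.Im z ^+ 2).

Definition cinner (xi sigma : 'cV[C]_d) : C :=
  \sum_(j < d) xi j ord0 * conjc (sigma j ord0).

Definition vnorm (xi : 'cV[C]_d) : R :=
  Num.sqrt (\sum_(j < d) cabs (xi j ord0) ^+ 2).

Definition vconj (xi : 'cV[C]_d) : 'cV[C]_d := map_mx (@conjc R) xi.

Definition Jop (s : R) (xi : 'cV[C]_d) : 'cV[C]_d :=
  rC (s / 2) *: (xi + rC (1 - 2 / s) *: vconj xi).

End Complex.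

Record quad (R : realType) (d : nat) := Quad {
  qA : 'rV[R]_d -> 'M[complex R]_d ;
  qb : 'rV[R]_d -> 'cV[complex R]_d ;
  qc : 'rV[R]_d -> 'cV[complex R]_d ;
  qV : 'rV[R]_d -> R }.

Section Classes.
Variables (R : realType) (d : nat) (Omega : set 'rV[R]_d).
Local Notation C := (complex R).
Local Notation leb := (@leb R d).

Definition cmeasurable (f : 'rV[R]_d -> C) : Prop :=
  measurable_fun (Omega : set (Rd R d)) ((fun z => @complex.Re R z) \o f : Rd R d -> R) /\
  measurable_fun (Omega : set (Rd R d)) ((fun z => @complex.Im R z) \o f : Rd R d -> R).

Definition elliptic (A : 'rV[R]_d -> 'M[C]_d) : Prop :=
  (forall i j : 'I_d, cmeasurable (fun x => A x i j)) /\
  exists lam Lam : R, 0 < lam /\ 0 < Lam /\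
    \forall x \ae leb, Omega x ->
      (forall xi : 'cV[C]_d, lam * vnorm xi ^+ 2 <= complex.Re (cinner (A x *m xi) xi)) /\
      (forall xi sigma : 'cV[C]_d,
          cabs (cinner (A x *m xi) sigma) <= Lam * vnorm xi * vnorm sigma).

Definition Linfty (b : 'rV[R]_d -> 'cV[C]_d) : Prop :=
  (forall j : 'I_d, cmeasurable (fun x => b x j ord0)) /\
  exists K : R, \forall x \ae leb, Omega x -> vnorm (b x) <= K.

Definition L1loc_nonneg (V : 'rV[R]_d -> R) : Prop :=
  measurable_fun (Omega : set (Rd R d)) (V : Rd R d -> R) /\
  (\forall x \ae leb, Omega x -> 0 <= V x) /\
  forall K : set 'rV[R]_d, compact K -> K `<=` Omega ->
    leb.-integrable (K : set (Rd R d)) (EFin \o (V : Rd R d -> R)).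

Definition admissible (Q : quad R d) : Prop :=
  elliptic (qA Q) /\ Linfty (qb Q) /\ Linfty (qc Q) /\ L1loc_nonneg (qV Q).

Definition Gamma (s : R) (Q : quad R d) (x : 'rV[R]_d) (xi : 'cV[C]_d) : R :=
  complex.Re (cinner (qA Q x *m xi) (Jop s xi))
  + complex.Re (cinner (qb Q x + Jop s (qc Q x)) xi) + qV Q x.

Definition Bclass (mu M : R) (Q : quad R d) : Prop :=
  0 < mu <= 1 /\ 0 < M /\ admissible Q /\
  \forall x \ae leb, Omega x ->
    (forall xi : 'cV[C]_d, mu * (vnorm xi ^+ 2 + qV Q x) <= Gamma 2 Q x xi) /\
    vnorm (qb Q x - qc Q x) <= M * Num.sqrt (qV Q x).

Definition Delta (s : R) (A : 'rV[R]_d -> 'M[C]_d) : \bar R :=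
  ess_inf leb (fun x : Rd R d =>
    if x \in Omega then
      ereal_inf [set (complex.Re (cinner (A x *m xi)
                        (xi + rC `|1 - 2 / s| *: vconj xi)))%:E
                | xi in [set xi : 'cV[C]_d | vnorm xi = 1]]
    else +oo%E).

Definition Aclass (s : R) (A : 'rV[R]_d -> 'M[C]_d) : Prop :=
  elliptic A /\ (0 < Delta s A)%E.

Definition Gamma_coercive (s mu' : R) (Q : quad R d) : Prop :=
  \forall x \ae leb, Omega x ->
    forall xi : 'cV[C]_d, mu' * (vnorm xi ^+ 2 + qV Q x) <= Gamma s Q x xi.

Definition Sclass (s : R) (Q : quad R d) : Prop :=
  admissible Q /\ Aclass s (qA Q) /\
  (exists M' : R, 0 < M' /\
     \forall x \ae leb, Omega x -> vnorm (qb Q x - qc Q x) <= M' * Num.sqrt (qV Q x)) /\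
  (exists mu' : R, 0 < mu' /\ Gamma_coercive s mu' Q).

Definition mu_s (s : R) (Q : quad R d) : R :=
  sup [set mu' : R | 0 < mu' /\ Gamma_coercive s mu' Q].

End Classes.

Definition truncV (R : realType) (d : nat) (Q : quad R d) (m : nat) : quad R d :=
  Quad (qA Q) (qb Q) (qc Q) (fun x => Num.min (qV Q x) m%:R).

From HB Require Import structures.
From mathcomp Require Import all_boot all_order all_algebra.
From mathcomp Require Import all_classical all_reals all_analysis.
From mathcomp.real_closed Require Import complex.
From mathcomp Require Import lra ring measurable_realfun.
Set Implicit Arguments.
Unset Strict Implicit.
Unset Printing Implicit Defensive.

Import Order.TTheory GRing.Theory Num.Theory numFieldNormedType.Exports.
Local Open Scope classical_set_scope.
Local Open Scope ring_scope.

(* Along a line [t xi], [Gamma_s(x, t xi) = t^2 a + t l + V], where [a] and [l] are the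
   parts of [Gamma_s] quadratic and linear in [xi]. Coercivity for every [t] forces
   [a >= mu |xi|^2], and [mu <= 1] wherever [V > 0]. As [b] and [c] are bounded, Young's
   inequality gives [l >= - eps |xi|^2 - K / (4 eps)], and on [{V > m}] this constant is
   absorbed by [eps V_m = eps m] as soon as [m >= K / (4 eps^2)]: truncating [V] costs at
   most [eps] in the coercivity constant. Conversely, coercivity of [A_m] at [t = 0, 1]
   gives coercivity of [A] with the same constant, so [mu_s(A_m) <= mu_s(A)], and the two
   bounds give the convergence of [mu_s(A_m)]. Finally [|b - c| <= M sqrt V_m] for large [m]
   because [b - c] is bounded. *)

Section LineCoercivity.
Variable R : realFieldType.
Implicit Types (eps mu n a l V m k c : R).

Lemma young_mul_ge eps a b : 0 < eps -> - (eps * b ^+ 2 + a ^+ 2 / (4 * eps)) <= a * b.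
Proof.
move=> eps0.
have : 0 <= eps * (b + a / (2 * eps)) ^+ 2 by rewrite mulr_ge0 ?sqr_ge0 ?ltW.
have -> : eps * (b + a / (2 * eps)) ^+ 2 = eps * b ^+ 2 + a * b + a ^+ 2 / (4 * eps).
  by field; lra.
lra.
Qed.

Lemma le0_of_quadratic_le k l c : (forall t, 0 < t -> t ^+ 2 * k <= t * l + c) -> k <= 0.
Proof.
move=> le_kc; rewrite leNgt; apply/negP => k0.
set t := (`|l| + `|c| + 1) / k + 1.
have t_ge1 : 1 <= t.
  by rewrite /t lerDr divr_ge0 // ?ltW // addr_ge0 // addr_ge0.
have tk : `|l| + `|c| + 1 <= t * k by rewrite /t mulrDl divfK ?gt_eqF //; lra.
have := le_kc t (lt_le_trans ltr01 t_ge1).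
have := ler_norm l; have := ler_norm c; have := normr_ge0 c; have := normr_ge0 l.
nra.
Qed.

(* Coercivity of [t |-> Gamma(x, t xi) = t^2 a + t l + V] with [n = |xi|^2]; see [GammaZ]. *)
Definition line_coercive mu n a l V :=
  forall t, mu * (t ^+ 2 * n + V) <= t ^+ 2 * a + t * l + V.

Lemma line_coercive_lead mu n a l V : line_coercive mu n a l V -> mu * n <= a.
Proof.
move=> coer; rewrite -subr_le0; apply: (@le0_of_quadratic_le _ l ((1 - mu) * V)) => t _.
by have := coer t; lra.
Qed.

Lemma line_coercive_min mu eps n a l V m :
  line_coercive mu n a l V -> 0 <= n -> 0 <= V -> 0 < eps < mu -> 0 <= m ->
  - (eps * (n + m)) <= l ->
  (mu - eps) * (n + Num.min V m) <= a + l + Num.min V m.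
Proof.
move=> coer n0 V0 /andP[eps0 eps_mu] m0 l_ge.
have := coer 1; rewrite expr1n !mul1r => coer1.
rewrite /Order.min; case: ifPn => [_|]; first by nra.
rewrite -leNgt le_eqVlt => /orP[/eqP ->|mV]; first by nra.
have := coer 0; rewrite expr0n /= !mul0r !add0r => coer0.
have := line_coercive_lead coer; nra.
Qed.

Lemma line_coercive_of_min mu n a l V m : 0 <= V -> 0 < m ->
  line_coercive mu n a l (Num.min V m) -> mu * (n + V) <= a + l + V.
Proof.
move=> V0 m0 coer.
have := coer 0; have := coer 1; rewrite expr0n expr1n /= !mul0r !mul1r !add0r.
rewrite /Order.min; case: ifPn => // /negbTE; rewrite ltNge => /negbFE mV.
by have := mulr_ge0 (ltW m0) V0; nra.
Qed.

End LineCoercivity.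

Section ComplexVectors.
Variables (R : realType) (d : nat).
Local Notation C := (complex R).
Implicit Types (z : C) (t s : R) (u v : 'cV[C]_d).

Lemma Re_rCM t z : complex.Re (rC t * z) = t * complex.Re z.
Proof. by case: z => a b /=; rewrite mul0r subr0. Qed.

Lemma conjc_rC t : conjc (rC t) = rC t.
Proof. by rewrite /rC /conjc oppr0. Qed.

Lemma vnorm_ge0 u : 0 <= vnorm u.
Proof. exact: sqrtr_ge0. Qed.

Lemma vnorm_sqr u :
  vnorm u ^+ 2 = \sum_(j < d) (complex.Re (u j ord0) ^+ 2 + complex.Im (u j ord0) ^+ 2).
Proof.
have cabs_sqr z : cabs z ^+ 2 = complex.Re z ^+ 2 + complex.Im z ^+ 2.
  by rewrite sqr_sqrtr // addr_ge0 // sqr_ge0.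
rewrite sqr_sqrtr; last by apply: sumr_ge0 => j _; rewrite sqr_ge0.
by apply: eq_bigr => j _; rewrite cabs_sqr.
Qed.

Lemma Re_cinner u v : complex.Re (cinner u v) =
  \sum_(j < d) (complex.Re (u j ord0) * complex.Re (v j ord0)
                + complex.Im (u j ord0) * complex.Im (v j ord0)).
Proof.
have ReD : {morph @complex.Re R : z w / z + w} by case=> ? ? [].
rewrite /cinner (big_morph _ ReD (erefl : complex.Re (0 : C) = 0)).
by apply: eq_bigr => j _; case: (u j ord0) (v j ord0) => a b [e f] /=; ring.
Qed.

Lemma cinnerZl (k : C) u v : cinner (k *: u) v = k * cinner u v.
Proof. by rewrite /cinner mulr_sumr; apply: eq_bigr => j _; rewrite !mxE mulrA. Qed.

Lemma cinnerZr (k : C) u v : cinner u (k *: v) = conjc k * cinner u v.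
Proof.
rewrite /cinner mulr_sumr; apply: eq_bigr => j _.
by rewrite !mxE rmorphM /=; ring.
Qed.

Lemma JopZ s t u : Jop s (rC t *: u) = rC t *: Jop s u.
Proof.
apply/matrixP => i j; rewrite !mxE (ord1 j) rmorphM /= oppr0 -/(rC t); ring.
Qed.

Lemma vnormZ_sqr t u : vnorm (rC t *: u) ^+ 2 = t ^+ 2 * vnorm u ^+ 2.
Proof.
rewrite !vnorm_sqr mulr_sumr; apply: eq_bigr => j _.
by rewrite mxE; case: (u j ord0) => a b /=; ring.
Qed.

Lemma vnormN u : vnorm (- u) = vnorm u.
Proof.
rewrite /vnorm; congr Num.sqrt; apply: eq_bigr => j _.
by rewrite mxE /cabs; case: (u j ord0) => a b /=; rewrite !sqrrN.
Qed.

Lemma vnorm_sqrD_le u v : vnorm (u + v) ^+ 2 <= 2 * vnorm u ^+ 2 + 2 * vnorm v ^+ 2.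
Proof.
rewrite !vnorm_sqr !mulr_sumr -big_split /=; apply: ler_sum => j _.
rewrite mxE; case: (u j ord0) (v j ord0) => a b [e f] /=.
have := sqr_ge0 (a - e); have := sqr_ge0 (b - f); nra.
Qed.

Lemma vnorm_sqr_Jop_le s :
  exists2 K, 0 <= K & forall u, vnorm (Jop s u) ^+ 2 <= K * vnorm u ^+ 2.
Proof.
set al := s / 2 * (1 + (1 - 2 / s)); set be := s / 2 * (1 - (1 - 2 / s)).
exists (al ^+ 2 + be ^+ 2); first by rewrite addr_ge0 ?sqr_ge0.
move=> u; rewrite !vnorm_sqr mulr_sumr; apply: ler_sum => j _.
have -> : Jop s u j ord0 = Complex (al * complex.Re (u j ord0)) (be * complex.Im (u j ord0)).
  rewrite !mxE /al /be; case: (u j ord0) => a b.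
  by apply/eqP; rewrite eq_complex /=; apply/andP; split; apply/eqP; ring.
case: (u j ord0) => a b /=.
have := mulr_ge0 (sqr_ge0 al) (sqr_ge0 b); have := mulr_ge0 (sqr_ge0 be) (sqr_ge0 a).
rewrite !exprMn; lra.
Qed.

Lemma Re_cinner_ge eps u v : 0 < eps ->
  - (eps * vnorm v ^+ 2 + vnorm u ^+ 2 / (4 * eps)) <= complex.Re (cinner u v).
Proof.
move=> eps0; rewrite Re_cinner !vnorm_sqr mulr_suml mulr_sumr -big_split /= -sumrN.
apply: ler_sum => j _; rewrite mulrDl.
have := young_mul_ge (complex.Re (u j ord0)) (complex.Re (v j ord0)) eps0.
have := young_mul_ge (complex.Im (u j ord0)) (complex.Im (v j ord0)) eps0.
lra.
Qed.

End ComplexVectors.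

Section GammaAlongLines.
Variables (R : realType) (d : nat).
Implicit Types (s t mu : R) (Q : quad R d) (x : 'rV[R]_d) (xi : 'cV[complex R]_d).

Definition Gamma_quadratic s Q x xi := complex.Re (cinner (qA Q x *m xi) (Jop s xi)).

Definition Gamma_linear s Q x xi := complex.Re (cinner (qb Q x + Jop s (qc Q x)) xi).

Lemma GammaZ s Q x t xi : Gamma s Q x (rC t *: xi) =
  t ^+ 2 * Gamma_quadratic s Q x xi + t * Gamma_linear s Q x xi + qV Q x.
Proof.
rewrite /Gamma -scalemxAr JopZ cinnerZl !(cinnerZr (rC t)) conjc_rC -mulrA !Re_rCM; ring.
Qed.

Lemma Gamma_line_coercive s mu Q x :
  (forall xi, mu * (vnorm xi ^+ 2 + qV Q x) <= Gamma s Q x xi) ->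
  forall xi, line_coercive mu (vnorm xi ^+ 2)
    (Gamma_quadratic s Q x xi) (Gamma_linear s Q x xi) (qV Q x).
Proof. by move=> coer xi t; rewrite -vnormZ_sqr -GammaZ. Qed.

End GammaAlongLines.

(* No measurability of [D] is required, which matters for the compact sets of [L1loc_nonneg]. *)
Lemma le_integral_abse_of_le (dT : measure_display) (T : measurableType dT) (R : realType)
    (mu : {measure set T -> \bar R}) (D : set T) (f g : T -> \bar R) :
  (forall x, (`|f x| <= `|g x|)%E) ->
  (\int[mu]_(x in D) `|f x| <= \int[mu]_(x in D) `|g x|)%E.
Proof.
move=> fg; rewrite !ge0_integralE //; apply: ereal_sup_le => _ [h h_le <-].
by exists h => // x; apply: le_trans (h_le x) _; rewrite /patch; case: ifP.
Qed.

#[local] Instance ae_leb_filter (R : realType) (d : nat) :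
  Filter (almost_everywhere (leb R d)) := @ae_filter_ringOfSetsType _ (Rd R d) _ (leb R d).

Lemma near_infty_ex (P : nat -> Prop) : (\forall m \near \oo, P m) ->
  exists N, forall m, (0 < m)%N -> (N <= m)%N -> P m.
Proof. by case=> N _ PN; exists N => m _ /PN. Qed.

Section Truncation.
Variables (R : realType) (d : nat) (Omega : set 'rV[R]_d).
Local Notation C := (complex R).
Local Notation leb := (leb R d).
Implicit Types (s mu eps : R) (Q : quad R d).

Lemma Linfty_combination_bounded (f : 'cV[C]_d -> 'cV[C]_d -> 'cV[C]_d) K1 K2 b c :
  0 <= K1 -> 0 <= K2 ->
  (forall u v, vnorm (f u v) ^+ 2 <= K1 * vnorm u ^+ 2 + K2 * vnorm v ^+ 2) ->
  Linfty Omega b -> Linfty Omega c ->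
  exists K, \forall x \ae leb, Omega x -> vnorm (f (b x) (c x)) ^+ 2 <= K.
Proof.
move=> K1_ge0 K2_ge0 f_le [_ [Kb b_le]] [_ [Kc c_le]].
exists (K1 * Kb ^+ 2 + K2 * Kc ^+ 2).
apply: filterS2 b_le c_le => x b_lex c_lex Ox.
have sqr_le (w : 'cV[C]_d) K : vnorm w <= K -> vnorm w ^+ 2 <= K ^+ 2.
  by move=> w_le; rewrite ler_sqr ?nnegrE ?vnorm_ge0 // (le_trans (vnorm_ge0 w)).
apply: le_trans (f_le _ _) _; apply: lerD; apply: ler_wpM2l => //.
- exact: sqr_le (b_lex Ox).
- exact: sqr_le (c_lex Ox).
Qed.

Lemma admissible_V_ge0 Q : admissible Omega Q -> \forall x \ae leb, Omega x -> 0 <= qV Q x.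
Proof. by case=> _ [_ [_ [_ []]]]. Qed.

Lemma admissible_truncV Q m : admissible Omega Q -> admissible Omega (truncV Q m).
Proof.
case=> adA [adb [adc [mV [V_ge0 intV]]]]; do 3!split => //.
have mVm : measurable_fun (Omega : set (Rd R d)) (qV (truncV Q m) : Rd R d -> R).
  by apply: measurable_minr => //; exact: measurable_cst.
split => //; split.
  by apply: filterS V_ge0 => x V_ge0x Ox; rewrite /= le_min V_ge0x ?ler0n.
move=> K cK KO; have /integrableP[_ intVK] := intV K cK KO.
apply/integrableP; split.
  apply/measurable_EFinP; apply: measurable_minr; last exact: measurable_cst.
  by apply/measurable_EFinP; exact: measurable_int (intV K cK KO).
apply: le_lt_trans intVK; apply: le_integral_abse_of_le => x /=.
rewrite lee_fin /Order.min; case: ifPn => //; rewrite -leNgt => m_le_V.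
by rewrite !ger0_norm // (le_trans _ m_le_V).
Qed.

Lemma Gamma_coercive_truncV s mu eps Q : admissible Omega Q -> 0 < eps < mu ->
  Gamma_coercive Omega s mu Q ->
  \forall m \near \oo, Gamma_coercive Omega s (mu - eps) (truncV Q m).
Proof.
move=> adQ eps_mu coer; have /andP[eps0 _] := eps_mu.
have [_ [adb [adc _]]] := adQ.
have [KJ KJ_ge0 Jop_le] := vnorm_sqr_Jop_le d s.
have [K drift_le] : exists K, \forall x \ae leb, Omega x ->
    vnorm (qb Q x + Jop s (qc Q x)) ^+ 2 <= K.
  apply: (Linfty_combination_bounded (f := fun u v => u + Jop s v) (K1 := 2) (K2 := 2 * KJ))
    adb adc; rewrite ?mulr_ge0 // => u v.
  by apply: le_trans (vnorm_sqrD_le _ _) _; rewrite lerD2l -mulrA ler_wpM2l.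
apply: filterS (nbhs_infty_ger (K / (4 * eps ^+ 2))) => m.
rewrite ler_pdivrMr ?mulr_gt0 ?exprn_gt0 // => K_le.
apply: filterS3 coer drift_le (admissible_V_ge0 adQ) => x coer_x drift_x V_ge0 Ox xi.
have lin_ge : - (eps * (vnorm xi ^+ 2 + m%:R)) <= Gamma_linear s Q x xi.
  apply: le_trans (Re_cinner_ge _ _ eps0).
  rewrite lerN2 mulrDr lerD2l ler_pdivrMr ?mulr_gt0 //.
  by have := drift_x Ox; lra.
exact: line_coercive_min (Gamma_line_coercive (coer_x Ox) xi) (sqr_ge0 _) (V_ge0 Ox)
  eps_mu (ler0n _ _) lin_ge.
Qed.

Lemma Gamma_coercive_of_truncV s mu Q m : (0 < m)%N -> admissible Omega Q ->
  Gamma_coercive Omega s mu (truncV Q m) -> Gamma_coercive Omega s mu Q.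
Proof.
move=> m0 adQ coer; apply: filterS2 coer (admissible_V_ge0 adQ) => x coer_x V_ge0 Ox xi.
apply: line_coercive_of_min (V_ge0 Ox) _ (Gamma_line_coercive (coer_x Ox) xi).
by rewrite ltr0n.
Qed.

Lemma Gamma_coercive_gt1_V_eq0 s mu Q : admissible Omega Q -> 1 < mu ->
  Gamma_coercive Omega s mu Q -> \forall x \ae leb, Omega x -> qV Q x = 0.
Proof.
move=> adQ mu_gt1 coer; apply: filterS2 coer (admissible_V_ge0 adQ) => x coer_x V_ge0 Ox.
have := Gamma_line_coercive (coer_x Ox) 0 0; rewrite expr0n /= !mul0r !add0r.
by have := V_ge0 Ox; nra.
Qed.

Lemma Gamma_coercive_truncV_V_eq0 s mu Q m :
  (\forall x \ae leb, Omega x -> qV Q x = 0) ->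
  Gamma_coercive Omega s mu (truncV Q m) <-> Gamma_coercive Omega s mu Q.
Proof.
move=> V0; split=> coer; apply: filterS2 V0 coer => x V0x coer_x Ox xi;
  by move: (coer_x Ox xi); rewrite /Gamma /= (V0x Ox) min_l ?ler0n.
Qed.

Lemma bc_bound_truncV M Q : admissible Omega Q -> 0 < M ->
  (\forall x \ae leb, Omega x -> vnorm (qb Q x - qc Q x) <= M * Num.sqrt (qV Q x)) ->
  \forall m \near \oo, \forall x \ae leb, Omega x ->
    vnorm (qb Q x - qc Q x) <= M * Num.sqrt (qV (truncV Q m) x).
Proof.
case=> _ [adb [adc _]] M0 bc.
have [K bc_le] : exists K, \forall x \ae leb, Omega x -> vnorm (qb Q x - qc Q x) ^+ 2 <= K.
  apply: (Linfty_combination_bounded (f := fun u v => u - v) (K1 := 2) (K2 := 2))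
    adb adc => // u v.
  by rewrite -(vnormN v); exact: vnorm_sqrD_le.
apply: filterS (nbhs_infty_ger (K / M ^+ 2)) => m.
rewrite ler_pdivrMr ?exprn_gt0 // => K_le.
apply: filterS2 bc bc_le => x bc_x bc_le_x Ox /=.
rewrite /Order.min; case: ifPn => _; first exact: bc_x.
rewrite -ler_sqr ?nnegrE ?vnorm_ge0 ?mulr_ge0 ?sqrtr_ge0 ?(ltW M0) //.
rewrite exprMn (sqr_sqrtr (ler0n _ m)).
by apply: le_trans (bc_le_x Ox) _; rewrite mulrC.
Qed.

Lemma Sclass_truncV s Q : Sclass Omega s Q -> \forall m \near \oo, Sclass Omega s (truncV Q m).
Proof.
case=> adQ [adA [[M' [M0 bc]] [mu [mu0 coer]]]].
have half_mu : 0 < mu / 2 < mu by apply/andP; split; lra.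
apply: filterS2 (bc_bound_truncV adQ M0 bc) (Gamma_coercive_truncV adQ half_mu coer).
move=> m bc_m coer_m.
split; first exact: admissible_truncV.
split=> //; split; first by exists M'.
by exists (mu - mu / 2); split => //; lra.
Qed.

Definition coercivity_set s Q := [set mu | 0 < mu /\ Gamma_coercive Omega s mu Q].

Lemma mu_sE s Q : mu_s Omega s Q = sup (coercivity_set s Q).
Proof. by []. Qed.

Lemma coercivity_set_truncV_sub s Q m : (0 < m)%N -> admissible Omega Q ->
  coercivity_set s (truncV Q m) `<=` coercivity_set s Q.
Proof. by move=> m0 adQ mu [mu0 coer]; split => //; exact: Gamma_coercive_of_truncV coer. Qed.

(* [sup] of an unbounded set is [0]; this case forces [V = 0] a.e., so nothing is truncated. *)
Lemma coercivity_set_truncV_unbounded s Q m : admissible Omega Q ->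
  coercivity_set s Q !=set0 -> ~ has_sup (coercivity_set s Q) ->
  coercivity_set s (truncV Q m) = coercivity_set s Q.
Proof.
move=> adQ ne unbdd; have [y [_ coer_y] y_gt1] := (has_supPn ne).1 unbdd 1.
have V0 := Gamma_coercive_gt1_V_eq0 adQ y_gt1 coer_y.
apply/seteqP; split=> mu [mu0 coer]; split=> //.
- exact/(Gamma_coercive_truncV_V_eq0 s mu m V0).
- exact/(Gamma_coercive_truncV_V_eq0 s mu m V0).
Qed.

Lemma mu_s_truncV_le s Q m : (0 < m)%N -> admissible Omega Q ->
  coercivity_set s Q !=set0 -> mu_s Omega s (truncV Q m) <= mu_s Omega s Q.
Proof.
move=> m0 adQ ne; rewrite !mu_sE.
have [bdd|unbdd] := pselect (has_sup (coercivity_set s Q)); last first.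
  by rewrite coercivity_set_truncV_unbounded.
have [->|/set0P ne_m] := eqVneq (coercivity_set s (truncV Q m)) set0.
  have [mu mu_in] := ne; have [mu0 _] := mu_in.
  by have := sup_upper_bound bdd mu_in; rewrite sup0; lra.
apply: ge_sup ne_m _ => mu /(coercivity_set_truncV_sub m0 adQ).
exact: sup_upper_bound.
Qed.

Lemma mu_s_truncV_ge s Q eps :
  admissible Omega Q -> coercivity_set s Q !=set0 -> 0 < eps ->
  \forall m \near \oo, mu_s Omega s Q - eps <= mu_s Omega s (truncV Q m).
Proof.
move=> adQ ne eps0.
have [bdd|unbdd] := pselect (has_sup (coercivity_set s Q)); last first.
  apply: nearW => m; rewrite !mu_sE coercivity_set_truncV_unbounded //.
  by rewrite lerBlDr lerDl ltW.
have [mu [mu0 coer] mu_gt] := sup_adherent (divr_gt0 eps0 (ltr0n _ 2)) bdd.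
set eta := Num.min mu eps / 2.
have [eta_le_mu eta_le_eps] : eta <= mu / 2 /\ eta <= eps / 2.
  by rewrite /eta !ler_pM2r ?ge_min ?lexx ?orbT.
have eta_mu : 0 < eta < mu by rewrite divr_gt0 ?lt_min ?mu0 ?eps0 //=; lra.
apply: filterS2 (Gamma_coercive_truncV adQ eta_mu coer) (nbhs_infty_gt 0) => m coer_m m0.
have mem : coercivity_set s (truncV Q m) (mu - eta) by split=> //; lra.
have bdd_m : has_sup (coercivity_set s (truncV Q m)).
  split; first by exists (mu - eta).
  exists (sup (coercivity_set s Q)) => nu /(coercivity_set_truncV_sub m0 adQ).
  exact: sup_upper_bound.
by have := sup_upper_bound bdd_m mem; rewrite !mu_sE; lra.
Qed.

Lemma mu_s_truncV_cvg s Q : admissible Omega Q -> coercivity_set s Q !=set0 ->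
  mu_s Omega s (truncV Q m) @[m --> \oo] --> mu_s Omega s Q.
Proof.
move=> adQ ne; apply/cvgrPdist_le => eps eps0.
apply: filterS2 (mu_s_truncV_ge adQ ne eps0) (nbhs_infty_gt 0) => m ge m0.
have le := mu_s_truncV_le m0 adQ ne.
by rewrite ler_norml; apply/andP; split; lra.
Qed.

End Truncation.

Theorem lemmaC1 (R : realType) (d : nat) (Omega : set 'rV[R]_d)
    (Q : quad R d) (mu M p : R) :
  open Omega -> Omega !=set0 ->
  Bclass Omega mu M Q ->
  1 < p ->
  let q := p / (p - 1) in
  (* (i) *)
  (forall eps : R, 0 < eps < mu ->
     exists m_eps : nat, forall m : nat, (0 < m)%N -> (m_eps <= m)%N ->
       Bclass Omega (mu - eps) M (truncV Q m)) /\
  (* (ii) *)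
  (Sclass Omega p Q ->
     (forall eps : R, 0 < eps < mu_s Omega p Q ->
        exists m_eps_p : nat, forall m : nat, (0 < m)%N -> (m_eps_p <= m)%N ->
          Sclass Omega p (truncV Q m) /\
          mu_s Omega p Q - eps <= mu_s Omega p (truncV Q m)) /\
     (mu_s Omega p (truncV Q m) @[m --> \oo] --> mu_s Omega p Q)) /\
  (* in particular: B_p = S_p /\ S_q is preserved for large m *)
  (Sclass Omega p Q -> Sclass Omega q Q ->
     exists N : nat, forall m : nat, (0 < m)%N -> (N <= m)%N ->
       Sclass Omega p (truncV Q m) /\ Sclass Omega q (truncV Q m)).
Proof.
move=> _ _ B_Q _ q; split; [|split].
- move=> eps eps_mu; have /andP[eps0 lt_eps_mu] := eps_mu.
  case: B_Q => /andP[mu0 mu_le1] [M0 [adQ B_Q]].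
  have coer : Gamma_coercive Omega 2 mu Q by apply: filterS B_Q => x B_x /B_x[].
  have bc : \forall x \ae leb R d, Omega x ->
      vnorm (qb Q x - qc Q x) <= M * Num.sqrt (qV Q x).
    by apply: filterS B_Q => x B_x /B_x[].
  apply: near_infty_ex.
  apply: filterS2 (Gamma_coercive_truncV adQ eps_mu coer) (bc_bound_truncV adQ M0 bc).
  move=> m coer_m bc_m; split; first by apply/andP; split; lra.
  split=> //; split; first exact: admissible_truncV.
  by apply: filterS2 coer_m bc_m => x coer_x bc_x Ox; split; [exact: coer_x | exact: bc_x].
- move=> S_Q; have [adQ [_ [_ ne]]] := S_Q.
  split; last exact: mu_s_truncV_cvg.
  move=> eps /andP[eps0 _]; apply: near_infty_ex.
  by apply: filterS2 (Sclass_truncV S_Q) (mu_s_truncV_ge adQ ne eps0).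
- move=> S_p S_q; apply: near_infty_ex.
  by apply: filterS2 (Sclass_truncV S_p) (Sclass_truncV S_q).
Qed.
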